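(* For distinct $a,b\in H^2$ and $k\in\mathbb R$ let $S_k(a,b)=\{x\in H^2: d_H(x,a)^2-d_H(x,b)^2=k\}$. For $\mathsf x=(x_1,x_2)$, $\mathsf y=(y_1,y_2)$ in $H^2\times H^2$ with $x_i\ne y_i$ let $E_k(\mathsf x,\mathsf y)=S_k(x_1,y_1)\times S_k(y_2,x_2)$. Let $\mathsf x=(x_1,x_2)$, $\mathsf y=(y_1,y_2)$, $\mathsf z=(z_1,z_2)\in H^2\times H^2$ be such that $\mathsf y$ is between $\mathsf x$ and $\mathsf z$, and suppose $E_k(\mathsf x,\mathsf y)\cap E_l(\mathsf y,\mathsf z)\ne\emptyset$ for some $k,l\in\mathbb R$. Then there exists $m\in\mathbb R$ such that either $S_m(x_1,y_1)\cap S_m(y_1,z_1)\neq\emptyset$ or $S_m(y_2,x_2)\cap S_m(z_2,y_2)\neq\emptyset$.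
   Context: For $x,y,z\in H^2$, let $l_1=S_0(x,y)$ and $l_2=S_0(y,z)$ be the equidistant lines; if $l_1,l_2$ are disjoint, the complement of $l_1\cup l_2$ has three components, two half-planes bounded by $l_1$ resp. $l_2$, and a slab bounded by $l_1\cup l_2$. We say $y$ is between $x$ and $z$ if $l_1$ and $l_2$ are disjoint and $y$ lies in the slab. For points of $H^2\times H^2$, $\mathsf y$ is between $\mathsf x$ and $\mathsf z$ if for each $i=1,2$ the coordinate $y_i$ is between $x_i$ and $z_i$ in this sense. $d_H$ is the hyperbolic distance. *)

From Stdlib Require Import Reals.
Open Scope R_scope.

(* Points of H^2: upper half-plane {(u,v) | v > 0}. *)
Record H2 : Type := mkH2 { hu : R; hv : R; hv_pos : 0 < hv }.

Definition arcosh (t : R) : R := ln (t + sqrt (t * t - 1)).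

(* hyperbolic distance: cosh d(p,q) = 1 + |p - q|^2 / (2 Im p Im q) *)
Definition dH (p q : H2) : R :=
  arcosh (1 + ((hu p - hu q)^2 + (hv p - hv q)^2) / (2 * hv p * hv q)).

Definition S (k : R) (a b : H2) : H2 -> Prop :=
  fun x => dH x a ^ 2 - dH x b ^ 2 = k.

Definition E (k : R) (x y : H2 * H2) : H2 * H2 -> Prop :=
  fun p => S k (fst x) (fst y) (fst p) /\ S k (snd y) (snd x) (snd p).

(* Signed side function of the equidistant line S_0(a,b):
   the two half-planes bounded by S_0(a,b) are {f > 0} and {f < 0}. *)
Definition side (a b p : H2) : R := dH p a ^ 2 - dH p b ^ 2.

(* y is between x and z in H^2: l1 = S_0(x,y), l2 = S_0(y,z) are disjoint,
   and y lies in the slab, i.e. on the side of l1 containing l2 and on the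
   side of l2 containing l1. *)
Definition between (x y z : H2) : Prop :=
  (forall w, ~ (S 0 x y w /\ S 0 y z w)) /\
  (forall w, S 0 y z w -> side x y w * side x y y > 0) /\
  (forall w, S 0 x y w -> side y z w * side y z y > 0).

Definition between2 (x y z : H2 * H2) : Prop :=
  between (fst x) (fst y) (fst z) /\ between (snd x) (snd y) (snd z).

(* For [w] on the common part of [S_m(a,b)] and [S_m(b,c)] the
   function [d(w,a)^2 + d(w,c)^2 - 2 d(w,b)^2] vanishes, and conversely every
   zero of it lies on such a common part (take [m := d(w,a)^2 - d(w,b)^2]).
   This function is nonnegative at [b].  A point of [E_k(x,y) ∩ E_l(y,z)]
   gives the value [k - l] in the first factor and [l - k] in the second, so
   in one factor it is nonpositive somewhere, and the intermediate value
   theorem along the Euclidean segment of the upper half-plane to [b]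
   produces a zero. *)
From Stdlib Require Import Reals Lra Ranalysis5 List.
Open Scope R_scope.

Lemma IVT_interv_le (f : R -> R) (x y : R) :
  (forall t, x <= t <= y -> continuity_pt f t) -> x <= y ->
  f x <= 0 <= f y -> exists t, x <= t <= y /\ f t = 0.
Proof.
  intros Hcont Hxy [Hfx Hfy].
  destruct (Req_dec (f x) 0) as [Ex | Nx]; [exists x; split; [lra | exact Ex] |].
  destruct (Req_dec (f y) 0) as [Ey | Ny]; [exists y; split; [lra | exact Ey] |].
  assert (Hlt : x < y) by (destruct (Req_dec x y); [subst; lra | lra]).
  destruct (IVT_interv f x y Hcont Hlt) as [t Ht]; [lra | lra | now exists t].
Qed.

Lemma continuity_pt_ln (x : R) : 0 < x -> continuity_pt ln x.
Proof. intro Hx. apply derivable_continuous_pt. exists (/ x). now apply derivable_pt_lim_ln. Qed.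

Lemma continuity_pt_arcosh (t : R) : 1 <= t -> continuity_pt arcosh t.
Proof.
  intro Ht. unfold arcosh.
  change (continuity_pt (comp ln (fun s => id s + comp sqrt (fun s => id s * id s - 1) s)) t).
  apply continuity_pt_comp.
  - apply continuity_pt_plus; [apply derivable_continuous_pt, derivable_pt_id |].
    apply continuity_pt_comp; [| apply continuity_pt_sqrt; unfold id; nra].
    apply continuity_pt_minus; [| apply continuity_pt_const; now intros ? ?].
    apply continuity_pt_mult; apply derivable_continuous_pt, derivable_pt_id.
  - apply continuity_pt_ln. unfold comp, id. pose proof (sqrt_pos (t * t - 1)). lra.
Qed.

Definition dist_from (u v : R) (q : H2) : R :=
  arcosh (1 + ((u - hu q) ^ 2 + (v - hv q) ^ 2) / (2 * v * hv q)).

Lemma dist_from_continuity (u v : R -> R) (q : H2) (t : R) :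
  continuity_pt u t -> continuity_pt v t -> 0 < v t ->
  continuity_pt (fun s => dist_from (u s) (v s) q) t.
Proof.
  intros Cu Cv Hv. pose proof (hv_pos q) as Hq.
  assert (Cc : forall c, continuity_pt (fun _ => c) t)
    by (intro c; apply continuity_pt_const; now intros ? ?).
  assert (Csq : forall f : R -> R, continuity_pt f t -> continuity_pt (fun s => f s ^ 2) t).
  { intros f Cf. change (continuity_pt (comp (fun r => r ^ 2) f) t).
    apply continuity_pt_comp; [exact Cf | apply derivable_continuous_pt, derivable_pt_pow]. }
  unfold dist_from.
  change (continuity_pt (comp arcosh (fun s =>
    1 + ((u s - hu q) ^ 2 + (v s - hv q) ^ 2) / (2 * v s * hv q))) t).
  apply continuity_pt_comp.
  - apply continuity_pt_plus; [apply Cc |].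
    apply continuity_pt_div; [| | nra].
    + apply continuity_pt_plus; apply Csq, continuity_pt_minus; auto.
    + repeat apply continuity_pt_mult; auto.
  - apply continuity_pt_arcosh.
    assert (0 <= ((u t - hu q) ^ 2 + (v t - hv q) ^ 2) / (2 * v t * hv q)); [| lra].
    apply Rle_mult_inv_pos; [| nra].
    apply Rplus_le_le_0_compat; apply pow2_ge_0.
Qed.

Lemma dH_refl (p : H2) : dH p p = 0.
Proof.
  pose proof (hv_pos p). unfold dH, arcosh.
  replace (1 + ((hu p - hu p) ^ 2 + (hv p - hv p) ^ 2) / (2 * hv p * hv p)) with 1
    by (field; lra).
  replace (1 * 1 - 1) with 0 by ring.
  now rewrite sqrt_0, Rplus_0_r, ln_1.
Qed.

Definition dist2_comb (cs : list (R * H2)) (w : H2) : R :=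
  fold_right (fun cq acc => fst cq * dH w (snd cq) ^ 2 + acc) 0 cs.

Section Segment.
Variables a b : H2.

Definition seg_u (t : R) : R := (1 - t) * hu a + t * hu b.
Definition seg_v (t : R) : R := (1 - t) * hv a + t * hv b.

Lemma seg_v_pos (t : R) : 0 <= t <= 1 -> 0 < seg_v t.
Proof. intro Ht. pose proof (hv_pos a); pose proof (hv_pos b). unfold seg_v; nra. Qed.

Definition seg_point (t : R) (Ht : 0 <= t <= 1) : H2 := mkH2 (seg_u t) (seg_v t) (seg_v_pos t Ht).

Definition dist2_comb_seg (cs : list (R * H2)) (t : R) : R :=
  fold_right (fun cq acc => fst cq * dist_from (seg_u t) (seg_v t) (snd cq) ^ 2 + acc) 0 cs.

Lemma dist2_comb_seg_point cs t (Ht : 0 <= t <= 1) :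
  dist2_comb cs (seg_point t Ht) = dist2_comb_seg cs t.
Proof. reflexivity. Qed.

Lemma dist2_comb_seg0 cs : dist2_comb_seg cs 0 = dist2_comb cs a.
Proof.
  unfold dist2_comb_seg.
  replace (seg_u 0) with (hu a) by (unfold seg_u; ring).
  replace (seg_v 0) with (hv a) by (unfold seg_v; ring).
  reflexivity.
Qed.

Lemma dist2_comb_seg1 cs : dist2_comb_seg cs 1 = dist2_comb cs b.
Proof.
  unfold dist2_comb_seg.
  replace (seg_u 1) with (hu b) by (unfold seg_u; ring).
  replace (seg_v 1) with (hv b) by (unfold seg_v; ring).
  reflexivity.
Qed.

Lemma dist2_comb_seg_continuity cs t :
  0 <= t <= 1 -> continuity_pt (dist2_comb_seg cs) t.
Proof.
  intro Ht.
  assert (Caff : forall c d, continuity_pt (fun s => (1 - s) * c + s * d) t).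
  { intros c d. apply derivable_continuous_pt. reg. }
  induction cs as [| [c q] cs IH]; cbn.
  - apply continuity_pt_const. now intros ? ?.
  - apply continuity_pt_plus; [| exact IH].
    apply continuity_pt_mult; [apply continuity_pt_const; now intros ? ? |].
    change (continuity_pt (comp (fun r => r ^ 2) (fun s => dist_from (seg_u s) (seg_v s) q)) t).
    apply continuity_pt_comp; [| apply derivable_continuous_pt, derivable_pt_pow].
    apply dist_from_continuity; [apply Caff | apply Caff | now apply seg_v_pos].
Qed.

End Segment.

Lemma dist2_comb_zero (cs : list (R * H2)) (p q : H2) :
  dist2_comb cs p <= 0 <= dist2_comb cs q -> exists w, dist2_comb cs w = 0.
Proof.
  intro Hpq.
  destruct (IVT_interv_le (dist2_comb_seg p q cs) 0 1) as [t [Ht Hzero]].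
  - intros t Ht. now apply dist2_comb_seg_continuity.
  - lra.
  - now rewrite dist2_comb_seg0, dist2_comb_seg1.
  - exists (seg_point p q t Ht). now rewrite dist2_comb_seg_point.
Qed.

Lemma S_common_of_dist2 (a b c w : H2) :
  dH w a ^ 2 + dH w c ^ 2 = 2 * dH w b ^ 2 ->
  exists m, S m a b w /\ S m b c w.
Proof. intro Hw. exists (dH w a ^ 2 - dH w b ^ 2). unfold S. lra. Qed.

Lemma S_common_nonempty (a b c p : H2) :
  dH p a ^ 2 + dH p c ^ 2 <= 2 * dH p b ^ 2 ->
  exists m w, S m a b w /\ S m b c w.
Proof.
  intro Hp.
  set (cs := (1, a) :: (1, c) :: (-2, b) :: nil).
  assert (Hcs : forall w, dist2_comb cs w = dH w a ^ 2 + dH w c ^ 2 - 2 * dH w b ^ 2)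
    by (intro w; cbn; ring).
  destruct (dist2_comb_zero cs p b) as [w Hw].
  - rewrite !Hcs, dH_refl. split; [lra |].
    pose proof (pow2_ge_0 (dH b a)); pose proof (pow2_ge_0 (dH b c)). lra.
  - rewrite Hcs in Hw. destruct (S_common_of_dist2 a b c w) as [m Hm]; [lra |].
    now exists m, w.
Qed.

Theorem mainTheorem6 (x y z : H2 * H2) :
  between2 x y z ->
  (exists k l : R, exists p : H2 * H2, E k x y p /\ E l y z p) ->
  exists m : R,
    (exists w : H2, S m (fst x) (fst y) w /\ S m (fst y) (fst z) w) \/
    (exists w : H2, S m (snd y) (snd x) w /\ S m (snd z) (snd y) w).
Proof.
  intros _ [k [l [p [[Hxy1 Hxy2] [Hyz1 Hyz2]]]]]. unfold S in *.
  destruct (Rle_or_lt k l) as [Hkl | Hlk].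
  - destruct (S_common_nonempty (fst x) (fst y) (fst z) (fst p)) as [m [w Hw]]; [lra |].
    exists m. left. now exists w.
  - destruct (S_common_nonempty (snd z) (snd y) (snd x) (snd p)) as [m [w [Hzy Hyx]]]; [lra |].
    exists m. right. now exists w.
Qed.
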